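(* The cellular automaton $F$ on the free group $G$ with generators $a,b$ and alphabet $A=\{0,1,\iota,\beta\}$ described in the context is not sensitive to initial conditions.
   Context: $G$ is the free group on $\{a,b\}$ with generating set $E=\{a,a^{-1},b,b^{-1}\}$, word norm $\|g\|$, and Cantor metric $d(x,y)=2^{-k}$, $k=\min\{\|g\|:x_g\neq y_g\}$, on $A^G$, with closed balls $B$. In a configuration $c\in A^G$, a position $g$ is free if $c_g\in\{0,1\}$ and $|\{g'\in gE: c_{g'}\in\{0,1\}\}|\geq 2$. A position $g$ is blocked in $c$ if either ($c_g=\iota$ and $c_{g'}\in\{\iota,\beta\}$ for all $g'\in gE$), or ($c_g=\beta$ and exactly one $g'\in gE$ has $c_{g'}=\iota$ and all other elements of $gE$ are free in $c$). The map $F:A^G\to A^G$ is defined by: $F(c)_g=c_g+\sum_{g'\in gE,\,c_{g'}\in\{0,1\}}c_{g'}\bmod 2$ if $c_g\in\{0,1\}$; $F(c)_g=c_g$ if $g$ is blocked in $c$; $F(c)_g=0$ otherwise. (It is a cellular automaton of radius 2.) $F$ is sensitive to initial conditions if $\exists\epsilon>0\,\forall x\,\forall\delta>0\,\exists t\in\mathbb{N}\,\exists y\in B(x,\delta)$ with $F^t(y)\notin B(F^t(x),\epsilon)$. *)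

From Stdlib Require Import Reals Lra List Bool Arith ClassicalEpsilon.
Import ListNotations.
Open Scope R_scope.

Inductive gen := ga | gai | gb | gbi.

Definition gen_eqb (x y : gen) : bool :=
  match x, y with
  | ga, ga | gai, gai | gb, gb | gbi, gbi => true
  | _, _ => false
  end.

Definition ginv (x : gen) : gen :=
  match x with ga => gai | gai => ga | gb => gbi | gbi => gb end.

Definition E : list gen := [ga; gai; gb; gbi].

(* Reduced words, stored in REVERSE order: the head is the LAST letter.
   Reducedness: no two adjacent letters are mutually inverse. *)
Fixpoint reduced (w : list gen) : bool :=
  match w with
  | x :: ((y :: _) as t) => negb (gen_eqb x (ginv y)) && reduced t
  | _ => true
  end.

Definition G := { w : list gen | reduced w = true }.

Definition gnorm (g : G) : nat := length (proj1_sig g).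

Definition mulgen_w (w : list gen) (e : gen) : list gen :=
  match w with
  | e' :: w' => if gen_eqb e' (ginv e) then w' else e :: w
  | [] => [e]
  end.

Lemma gen_eqb_eq x y : gen_eqb x y = true <-> x = y.
Proof. destruct x, y; simpl; split; congruence. Qed.

Lemma mulgen_reduced w e : reduced w = true -> reduced (mulgen_w w e) = true.
Proof.
  destruct w as [|e' w']; simpl; [reflexivity|].
  destruct (gen_eqb e' (ginv e)) eqn:He.
  - destruct w' as [|y t]; [reflexivity|].
    intros H; apply andb_prop in H; tauto.
  - intros H. simpl. rewrite H, andb_true_r.
    destruct e, e'; simpl in *; try reflexivity; discriminate.
Qed.

Definition mulgen (g : G) (e : gen) : G :=
  exist _ (mulgen_w (proj1_sig g) e) (mulgen_reduced _ e (proj2_sig g)).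

Inductive A := A0 | A1 | Aiota | Abeta.

Definition config := G -> A.

Definition is_bit (s : A) : bool :=
  match s with A0 | A1 => true | _ => false end.

Definition bitval (s : A) : bool :=
  match s with A1 => true | _ => false end.

Definition is_iota (s : A) : bool := match s with Aiota => true | _ => false end.
Definition is_beta (s : A) : bool := match s with Abeta => true | _ => false end.

(* Number of g' in gE with c_{g'} in {0,1}.  The four elements g e (e in E)
   are pairwise distinct in the free group, so counting over E is counting
   over the set gE. *)
Definition nbits_nbr (c : config) (g : G) : nat :=
  length (filter (fun e => is_bit (c (mulgen g e))) E).

Definition freeb (c : config) (g : G) : bool :=
  is_bit (c g) && Nat.leb 2 (nbits_nbr c g).

Definition blockedb (c : config) (g : G) : bool :=
  (is_iota (c g) &&
     forallb (fun e => is_iota (c (mulgen g e)) || is_beta (c (mulgen g e))) E)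
  ||
  (is_beta (c g) &&
     existsb (fun e =>
       is_iota (c (mulgen g e)) &&
       forallb (fun e' => gen_eqb e' e || freeb c (mulgen g e')) E) E &&
     Nat.eqb (length (filter (fun e => is_iota (c (mulgen g e))) E)) 1).

Definition F (c : config) : config := fun g =>
  if is_bit (c g) then
    (if fold_left xorb
          (map (fun e => if is_bit (c (mulgen g e)) then bitval (c (mulgen g e)) else false) E)
          (bitval (c g))
     then A1 else A0)
  else if blockedb c g then c g
  else A0.

Definition differ_at (x y : config) (k : nat) : Prop :=
  exists g : G, gnorm g = k /\ x g <> y g.

Definition min_differ (x y : config) : nat :=
  epsilon (inhabits 0%nat)
    (fun k => differ_at x y k /\ forall m, differ_at x y m -> (k <= m)%nat).

Definition cdist (x y : config) : R :=
  if excluded_middle_informative (exists g : G, x g <> y g)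
  then (/ 2) ^ (min_differ x y) else 0.

Definition cball (x : config) (r : R) : config -> Prop := fun y => cdist x y <= r.

Definition sensitive (f : config -> config) : Prop :=
  exists eps : R, eps > 0 /\
    forall x : config, forall delta : R, delta > 0 ->
      exists t : nat, exists y : config,
        cball x delta y /\ ~ cball (Nat.iter t f x) eps (Nat.iter t f y).

(** A ball of [iota]s of radius [N], wrapped in a sphere of [beta]s and followed by
    two layers of bits, is a wall that [F] never changes: the [iota]s only see
    [iota]s and [beta]s, every [beta] sees exactly one [iota] (towards the origin)
    and three outer neighbours which are free because bits stay bits and each of
    them has three outward bit neighbours.  Since this pattern is determined by the
    ball of radius [N + 3], every configuration close enough to it carries the same
    wall, so its whole orbit agrees with the orbit of the wall configuration on the
    ball of radius [N + 1]: the wall configuration is an equicontinuity point. *)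

From Stdlib Require Import Reals Lra Lia List Bool Arith Wf_nat ClassicalEpsilon Classical.

Section CantorMetric.

Local Open Scope R_scope.

Lemma pow_half_le m n : (m <= n)%nat -> (/ 2) ^ n <= (/ 2) ^ m.
Proof.
  intro Hmn. rewrite !pow_inv. apply Rinv_le_contravar.
  - apply pow_lt; lra.
  - apply Rle_pow; [lra | exact Hmn].
Qed.

Lemma pow_half_lt m n : (m < n)%nat -> (/ 2) ^ n < (/ 2) ^ m.
Proof.
  intro Hmn. rewrite !pow_inv. apply Rinv_lt_contravar.
  - apply Rmult_lt_0_compat; apply pow_lt; lra.
  - apply Rlt_pow; [lra | exact Hmn].
Qed.

Lemma min_differ_spec x y : (exists g, x g <> y g) ->
  differ_at x y (min_differ x y) /\
  forall m, differ_at x y m -> (min_differ x y <= m)%nat.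
Proof.
  intros [g Hg]. unfold min_differ. apply epsilon_spec.
  destruct (dec_inh_nat_subset_has_unique_least_element (differ_at x y))
    as [k [Hk _]].
  - intro n; apply classic.
  - exists (gnorm g), g; split; [reflexivity | exact Hg].
  - exists k; exact Hk.
Qed.

Lemma cdist_le_of_agree x y K :
  (forall g, (gnorm g < K)%nat -> x g = y g) -> cdist x y <= (/ 2) ^ K.
Proof.
  intro Hagree. unfold cdist.
  destruct (excluded_middle_informative (exists g, x g <> y g)) as [Hex | _].
  - destruct (min_differ_spec x y Hex) as [[g [Hg Hxy]] _].
    apply pow_half_le.
    destruct (le_lt_dec K (min_differ x y)) as [Hle | Hlt]; [exact Hle |].
    exfalso; apply Hxy, Hagree; lia.
  - left; apply pow_lt; lra.
Qed.

Lemma agree_of_cdist_le x y K :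
  cdist x y <= (/ 2) ^ K -> forall g, (gnorm g < K)%nat -> x g = y g.
Proof.
  intros Hdist g Hg. apply NNPP; intro Hxy.
  unfold cdist in Hdist.
  destruct (excluded_middle_informative (exists g, x g <> y g)) as [Hex | Hno].
  - destruct (min_differ_spec x y Hex) as [_ Hmin].
    assert (Hle : (min_differ x y <= gnorm g)%nat) by (apply Hmin; exists g; auto).
    pose proof (pow_half_lt (min_differ x y) K ltac:(lia)). lra.
  - apply Hno; exists g; exact Hxy.
Qed.

End CantorMetric.

Local Open Scope nat_scope.

Lemma ginv_involutive e : ginv (ginv e) = e.
Proof. destruct e; reflexivity. Qed.

Lemma mulgen_cancel_norm g e w :
  proj1_sig g = e :: w -> gnorm (mulgen g (ginv e)) = length w.
Proof.
  intro Hg. unfold gnorm, mulgen; simpl. rewrite Hg; simpl.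
  rewrite ginv_involutive. destruct e; reflexivity.
Qed.

Lemma mulgen_extend g e w f :
  proj1_sig g = e :: w -> f <> ginv e -> proj1_sig (mulgen g f) = f :: e :: w.
Proof.
  intros Hg Hf. unfold mulgen; simpl. rewrite Hg; simpl.
  destruct (gen_eqb e (ginv f)) eqn:He; [| reflexivity].
  apply gen_eqb_eq in He; subst e.
  rewrite ginv_involutive in Hf; contradiction.
Qed.

Lemma gnorm_mulgen_le g e : gnorm (mulgen g e) <= S (gnorm g).
Proof.
  unfold gnorm, mulgen; simpl.
  destruct (proj1_sig g) as [| e' w]; simpl; [lia |].
  destruct (gen_eqb e' (ginv e)); simpl; lia.
Qed.

Lemma filter_E_all_but_one (p : gen -> bool) f :
  (forall e, e <> f -> p e = true) -> 3 <= length (filter p E).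
Proof.
  intro Hp. unfold E.
  destruct f; cbn [filter];
    rewrite ?(Hp ga), ?(Hp gai), ?(Hp gb), ?(Hp gbi) by discriminate;
    match goal with |- context [p ?f] => destruct (p f) end; simpl; lia.
Qed.

Lemma filter_E_only (p : gen -> bool) f :
  p f = true -> (forall e, e <> f -> p e = false) -> length (filter p E) = 1.
Proof.
  intros Hf Hp. unfold E.
  destruct f; cbn [filter]; rewrite Hf;
    rewrite ?(Hp ga), ?(Hp gai), ?(Hp gb), ?(Hp gbi) by discriminate; reflexivity.
Qed.

Section LocalRule.

Variable c : config.

Lemma F_bit g : is_bit (c g) = true -> is_bit (F c g) = true.
Proof. intro H. unfold F. rewrite H. destruct (fold_left _ _ _); reflexivity. Qed.

Lemma F_blocked g : is_bit (c g) = false -> blockedb c g = true -> F c g = c g.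
Proof. intros Hbit Hbl. unfold F. rewrite Hbit, Hbl. reflexivity. Qed.

Lemma freeb_intro k f :
  is_bit (c k) = true -> (forall e, e <> f -> is_bit (c (mulgen k e)) = true) ->
  freeb c k = true.
Proof.
  intros Hk Hnbr. unfold freeb, nbits_nbr. rewrite Hk, andb_true_l, Nat.leb_le.
  pose proof (filter_E_all_but_one _ f Hnbr). lia.
Qed.

Lemma blockedb_iota g :
  c g = Aiota -> (forall e, c (mulgen g e) = Aiota \/ c (mulgen g e) = Abeta) ->
  blockedb c g = true.
Proof.
  intros Hg Hnbr. unfold blockedb. rewrite Hg.
  apply orb_true_intro; left. apply andb_true_intro; split; [reflexivity |].
  apply forallb_forall. intros e _.
  destruct (Hnbr e) as [-> | ->]; reflexivity.
Qed.

Lemma blockedb_beta g f :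
  c g = Abeta -> c (mulgen g f) = Aiota ->
  (forall e, e <> f -> freeb c (mulgen g e) = true) -> blockedb c g = true.
Proof.
  intros Hg Hf Hfree. unfold blockedb. rewrite Hg.
  apply orb_true_intro; right.
  assert (Hbits : forall e, e <> f -> is_iota (c (mulgen g e)) = false).
  { intros e He. specialize (Hfree e He). unfold freeb in Hfree.
    destruct (c (mulgen g e)); simpl in *; congruence. }
  rewrite (filter_E_only _ f) by (rewrite ?Hf; auto).
  rewrite Nat.eqb_refl, andb_true_r, andb_true_l.
  apply existsb_exists. exists f; split.
  - destruct f; simpl; tauto.
  - rewrite Hf, andb_true_l. apply forallb_forall. intros e _.
    destruct (gen_eqb e f) eqn:Hef; [reflexivity |]; rewrite orb_false_l.
    apply Hfree. intro Heq; subst e; destruct f; discriminate.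
Qed.

End LocalRule.

Record wall (N : nat) (c : config) : Prop := {
  wall_iota : forall g, gnorm g <= N -> c g = Aiota;
  wall_beta : forall g, gnorm g = S N -> c g = Abeta;
  wall_bits : forall g, S (S N) <= gnorm g <= S (S (S N)) -> is_bit (c g) = true
}.

Section Wall.

Variables (N : nat) (c : config).
Hypothesis Hwall : wall N c.

Lemma wall_F_iota g : gnorm g <= N -> F c g = Aiota.
Proof.
  intro Hg. rewrite <- (wall_iota _ _ Hwall g Hg).
  apply F_blocked.
  - rewrite (wall_iota _ _ Hwall g Hg); reflexivity.
  - apply blockedb_iota; [exact (wall_iota _ _ Hwall g Hg) |]. intro e.
    pose proof (gnorm_mulgen_le g e).
    destruct (le_lt_dec (gnorm (mulgen g e)) N).
    + left; apply (wall_iota _ _ Hwall); assumption.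
    + right; apply (wall_beta _ _ Hwall); lia.
Qed.

Lemma wall_F_beta g : gnorm g = S N -> F c g = Abeta.
Proof.
  intro Hg. pose proof (wall_beta _ _ Hwall g Hg) as Hbeta.
  destruct (proj1_sig g) as [| e w] eqn:Hword.
  { unfold gnorm in Hg; rewrite Hword in Hg; discriminate. }
  assert (Hw : length w = N) by (unfold gnorm in Hg; rewrite Hword in Hg; simpl in Hg; lia).
  rewrite <- Hbeta. apply F_blocked; [rewrite Hbeta; reflexivity |].
  apply (blockedb_beta c g (ginv e) Hbeta).
  - apply (wall_iota _ _ Hwall). rewrite (mulgen_cancel_norm g e w Hword). lia.
  - intros f Hf.
    assert (Hout : proj1_sig (mulgen g f) = f :: e :: w)
      by exact (mulgen_extend g e w f Hword Hf).
    apply (freeb_intro c _ (ginv f)).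
    + apply (wall_bits _ _ Hwall). unfold gnorm; rewrite Hout; simpl; lia.
    + intros h Hh. apply (wall_bits _ _ Hwall). unfold gnorm.
      rewrite (mulgen_extend _ f (e :: w) h Hout Hh). simpl; lia.
Qed.

Lemma wall_F : wall N (F c).
Proof.
  constructor.
  - exact wall_F_iota.
  - exact wall_F_beta.
  - intros g Hg. apply F_bit, (wall_bits _ _ Hwall), Hg.
Qed.

End Wall.

Lemma wall_iter N c t : wall N c -> wall N (Nat.iter t F c).
Proof.
  intro Hwall. induction t as [| t IH]; simpl; [exact Hwall | exact (wall_F N _ IH)].
Qed.

Lemma wall_agree N c d : wall N c -> wall N d ->
  forall g, gnorm g <= S N -> c g = d g.
Proof.
  intros Hc Hd g Hg. destruct (le_lt_dec (gnorm g) N).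
  - rewrite (wall_iota _ _ Hc), (wall_iota _ _ Hd) by assumption; reflexivity.
  - rewrite (wall_beta _ _ Hc), (wall_beta _ _ Hd) by lia; reflexivity.
Qed.

Lemma wall_ext N c d : wall N c ->
  (forall g, gnorm g <= S (S (S N)) -> c g = d g) -> wall N d.
Proof.
  intros Hc Hcd. constructor; intros g Hg; rewrite <- Hcd by lia.
  - exact (wall_iota _ _ Hc g Hg).
  - exact (wall_beta _ _ Hc g Hg).
  - exact (wall_bits _ _ Hc g Hg).
Qed.

Definition wall_config (N : nat) : config := fun g =>
  if gnorm g <=? N then Aiota else if gnorm g =? S N then Abeta else A0.

Lemma wall_wall_config N : wall N (wall_config N).
Proof.
  constructor; intros g Hg; unfold wall_config.
  - apply Nat.leb_le in Hg; rewrite Hg; reflexivity.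
  - rewrite Hg, Nat.eqb_refl, (proj2 (Nat.leb_gt (S N) N)) by lia; reflexivity.
  - rewrite (proj2 (Nat.leb_gt (gnorm g) N)) by lia.
    destruct (Nat.eqb_spec (gnorm g) (S N)); [lia | reflexivity].
Qed.

Local Open Scope R_scope.

Theorem lemma7 : ~ sensitive F.
Proof.
  intros [eps [Heps Hsens]].
  destruct (pow_lt_1_zero (/ 2) ltac:(rewrite Rabs_pos_eq; lra) eps Heps) as [N HN].
  destruct (Hsens (wall_config N) ((/ 2) ^ (N + 4)) ltac:(apply pow_lt; lra))
    as [t [y [Hy Hfar]]].
  apply Hfar; unfold cball.
  assert (Hwall_y : wall N y).
  { apply (wall_ext N (wall_config N)); [apply wall_wall_config |].
    intros g Hg. apply (agree_of_cdist_le _ _ (N + 4)); [exact Hy | lia]. }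
  apply Rle_trans with ((/ 2) ^ (N + 2)).
  - apply cdist_le_of_agree. intros g Hg.
    apply (wall_agree N); [apply wall_iter, wall_wall_config | apply wall_iter, Hwall_y | lia].
  - specialize (HN (N + 2)%nat ltac:(lia)).
    rewrite Rabs_pos_eq in HN by (apply pow_le; lra). lra.
Qed.
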